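(* Every monotone protocol for the game $G_n$ has cost at least $\lfloor\sqrt{n}\rfloor$.
   Context: The game $G_n$ ($n$ a positive integer): Alice receives, as a stream, a permutation $\sigma=(\sigma_1,\dots,\sigma_n)$ of $[n]=\{1,\dots,n\}$ followed by a bit $b\in\{0,1\}$. She has an array $\mathbf{v}=(v_1,\dots,v_n)$ whose cells are initially empty. For each $i<n$, upon receiving $\sigma_i$ she writes a bit in cell $\sigma_i$, which cannot later be changed. Upon receiving $\sigma_n$ and $b$ she writes $b$ in cell $\sigma_n$. Bob receives the completed array $\mathbf{v}\in\{0,1\}^n$ and outputs a set $J\subseteq[n]$ as a function of $\mathbf{v}$. A protocol is valid if $\sigma_n\in J$ for all $\sigma,b$; its cost is the maximum of $|J|$ over all $\sigma,b$. Protocols are required to be valid. A partial assignment is an element of $\{0,1,*\}^n$ ($*$ = unfilled). An order oblivious protocol is one given by maps $A_1,\dots,A_n$ from partial assignments to $\{0,1\}$: when $\sigma_i$ ($i<n$) arrives and the current partial assignment is $\mathbf{v}$, Alice writes $A_{\sigma_i}(\mathbf{v})$ in cell $\sigma_i$. For partial assignments $\alpha,\beta$, $\beta$ extends $\alpha$ ($\beta\ge\alpha$) if $\beta$ is obtained from $\alpha$ by fixing additional cells. The protocol is monotone if it is order oblivious and each $A_i$ is monotone: $\beta\ge\alpha$ implies $A_i(\beta)\ge A_i(\alpha)$. *)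

From mathcomp Require Import all_boot.
Set Implicit Arguments. Unset Strict Implicit. Unset Printing Implicit Defensive.

(* Partial assignments over [n] = 'I_n : None = unfilled ( * ), Some b = bit b. *)
Definition passign (n : nat) := {ffun 'I_n -> option bool}.

Definition empty_pa (n : nat) : passign n := [ffun _ => None].

Definition extends n (beta alpha : passign n) : Prop :=
  forall i b, alpha i = Some b -> beta i = Some b.

Definition fill n (v : passign n) (i : 'I_n) (b : bool) : passign n :=
  [ffun j => if j == i then Some b else v j].

(* An order oblivious protocol for Alice: A i v is the bit written in cell i
   when the current partial assignment is v. *)
Definition alice n := 'I_n -> passign n -> bool.

Definition monotone_alice n (A : alice n) : Prop :=
  forall i alpha beta, extends beta alpha -> A i alpha <= A i beta.

(* Alice processes the stream s (the first n-1 elements of sigma). *)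
Fixpoint run n (A : alice n) (s : seq 'I_n) (v : passign n) : passign n :=
  match s with
  | [::] => v
  | i :: s' => run A s' (fill v i (A i v))
  end.

(* The completed array Bob receives, for sigma = rcons s x (so sigma_n = x)
   and final bit b. Cells are all filled when sigma is a permutation. *)
Definition final_array n (A : alice n) (s : seq 'I_n) (x : 'I_n) (b : bool)
  : {ffun 'I_n -> bool} :=
  [ffun j => odflt false (fill (run A s (empty_pa n)) x b j)].

Definition bob n := {ffun 'I_n -> bool} -> {set 'I_n}.

Definition is_perm_seq n (sigma : seq 'I_n) : bool :=
  uniq sigma && (size sigma == n).

Definition valid n (A : alice n) (B : bob n) : Prop :=
  forall s x b, is_perm_seq (rcons s x) -> x \in B (final_array A s x b).

Definition isqrt (n : nat) : nat := \max_(k < n.+1 | k * k <= n) k.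

From mathcomp Require Import all_boot zify.
From Stdlib Require Import Classical.
Set Implicit Arguments. Unset Strict Implicit. Unset Printing Implicit Defensive.

(* Let y be a longest sequence of cells that Alice fills with 0 when they are
   streamed first.  By maximality every other cell then gets 1, and by
   monotonicity it keeps getting 1 in any order.  A last cell x outside y is
   thus seen by Bob in the array with zeros exactly on y.  A last cell x in y,
   streamed with bit 0 after y minus x, is seen in that same array or, if some
   cell u outside y now gets 0, in the array with zeros on y plus u.  So Bob's
   answers to the at most 1 + |~y| arrays of these shapes cover [n], and the
   one for zeros on y contains ~y.  With all answers of size < k this gives
   n <= k(k-1) < k^2, impossible for k = floor(sqrt n). *)

Definition pa01 n (Z O : seq 'I_n) : passign n :=
  [ffun j => if j \in Z then Some false else if j \in O then Some true else None].

Definition ones_off n (Z : {set 'I_n}) : {ffun 'I_n -> bool} := [ffun j => j \notin Z].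

Section PartialAssignments.
Variable n : nat.
Implicit Types (Z O : seq 'I_n) (i : 'I_n).

Lemma eq_pa01 (Z1 Z2 O1 O2 : seq 'I_n) : Z1 =i Z2 -> O1 =i O2 -> pa01 Z1 O1 = pa01 Z2 O2.
Proof. by move=> eqZ eqO; apply/ffunP => j; rewrite !ffunE eqZ eqO. Qed.

Lemma empty_pa01 : empty_pa n = pa01 [::] [::].
Proof. by apply/ffunP => j; rewrite !ffunE. Qed.

Lemma fill_pa01_false Z O i : fill (pa01 Z O) i false = pa01 (i :: Z) O.
Proof. by apply/ffunP => j; rewrite !ffunE in_cons; case: eqP. Qed.

Lemma fill_pa01_true Z O i : i \notin Z -> fill (pa01 Z O) i true = pa01 Z (i :: O).
Proof.
move=> iNZ; apply/ffunP => j; rewrite !ffunE in_cons.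
by case: eqP => [->|//]; rewrite (negbTE iNZ).
Qed.

Lemma extends_pa01_zeros (Z1 Z2 : seq 'I_n) :
  {subset Z1 <= Z2} -> extends (pa01 Z2 [::]) (pa01 Z1 [::]).
Proof. by move=> sZ12 j b; rewrite !ffunE in_nil; case: ifP => // /sZ12 ->. Qed.

Lemma extends_pa01_ones Z O : extends (pa01 Z O) (pa01 Z [::]).
Proof. by move=> j b; rewrite !ffunE in_nil; case: ifP. Qed.

End PartialAssignments.

Lemma run_cat n (A : alice n) s1 s2 v : run A (s1 ++ s2) v = run A s2 (run A s1 v).
Proof. by elim: s1 v => //= i s IH v; rewrite IH. Qed.

Lemma mem_catrev (T : eqType) (s t : seq T) : catrev s t =i s ++ t.
Proof. by move=> x; rewrite catrevE !mem_cat mem_rev. Qed.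

Fixpoint zero_chain n (A : alice n) (acc s : seq 'I_n) : bool :=
  if s is i :: s' then ~~ A i (pa01 acc [::]) && zero_chain A (i :: acc) s' else true.

Definition zero_prefix n (A : alice n) (y : seq 'I_n) := uniq y && zero_chain A [::] y.

Section MonotoneAlice.
Variables (n : nat) (A : alice n).
Hypothesis monoA : monotone_alice A.

Lemma monotone_aliceW i alpha beta : extends beta alpha -> A i alpha -> A i beta.
Proof. by move=> ext; have := monoA i ext; case: (A i alpha); case: (A i beta). Qed.

Lemma run_zero_chain acc s :
  zero_chain A acc s -> run A s (pa01 acc [::]) = pa01 (catrev s acc) [::].
Proof.
elim: s acc => //= i s IH acc /andP [Ai0 chain_s].
by rewrite (negbTE Ai0) fill_pa01_false IH.
Qed.

Lemma zero_chain_rcons acc s u :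
  zero_chain A acc s -> ~~ A u (pa01 (catrev s acc) [::]) -> zero_chain A acc (rcons s u).
Proof. by elim: s acc => [|i s IH] acc /=; [move=> _ -> | case/andP => -> /IH]. Qed.

Lemma zero_chain_filter p acc acc' s :
  zero_chain A acc s -> {subset acc' <= acc} -> zero_chain A acc' (filter p s).
Proof.
elim: s acc acc' => //= i s IH acc acc' /andP [Ai0 chain_s] sub_acc.
have sub_cons : {subset acc' <= i :: acc} by move=> u /sub_acc; rewrite in_cons orbC => ->.
case: (p i) => /=; last exact: IH chain_s sub_cons.
apply/andP; split; last first.
  by apply: IH chain_s _ => u; rewrite !in_cons => /predU1P [->|/sub_acc ->]; rewrite ?eqxx ?orbT.
exact: contra (monotone_aliceW (extends_pa01_zeros sub_acc)) Ai0.
Qed.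

(* A cell set to 1 on the zeros [y] alone stays 1 whatever ones were written meanwhile. *)
Lemma run_ones y o acc :
  {in o, forall u, A u (pa01 y [::])} -> {in o, forall u, u \notin y} ->
  run A o (pa01 y acc) = pa01 y (catrev o acc).
Proof.
elim: o acc => //= i o IH acc A1 oNy.
rewrite (monotone_aliceW (@extends_pa01_ones _ y acc) (A1 i (mem_head _ _))).
rewrite fill_pa01_true ?oNy ?mem_head // IH // => u uo;
  [apply: A1 | apply: oNy]; by rewrite in_cons uo orbT.
Qed.

Lemma zero_prefix_rcons y u :
  zero_prefix A y -> u \notin y -> ~~ A u (pa01 y [::]) -> zero_prefix A (rcons y u).
Proof.
case/andP=> uniq_y chain_y uNy Au0; rewrite /zero_prefix rcons_uniq uNy uniq_y.
apply: zero_chain_rcons => //.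
by rewrite (eq_pa01 (Z2 := y) _ (frefl _)) // => j; rewrite mem_catrev cats0.
Qed.

Lemma zero_prefix_filter p y : zero_prefix A y -> zero_prefix A (filter p y).
Proof.
by case/andP=> uniq_y chain_y; rewrite /zero_prefix filter_uniq // (zero_chain_filter _ chain_y).
Qed.

Lemma zero_prefix_size_le y : zero_prefix A y -> size y <= n.
Proof. by case/andP => /card_uniqP <- _; rewrite -[n in _ <= n]card_ord max_card. Qed.

Lemma play_zero_prefix y x b :
  zero_prefix A y -> x \notin y ->
  (forall u, u \notin y -> u != x -> A u (pa01 y [::])) ->
  exists s, is_perm_seq (rcons s x) /\
    final_array A s x b = [ffun j => if j == x then b else j \notin y].
Proof.
case/andP=> uniq_y chain_y xNy A1.
set o := [seq j <- enum 'I_n | (j \notin y) && (j != x)].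
have mem_o j : (j \in o) = (j \notin y) && (j != x) by rewrite mem_filter mem_enum andbT.
have mem_rev_y : catrev y [::] =i y by move=> j; rewrite mem_catrev cats0.
exists (y ++ o); split.
  have uniq_s : uniq (rcons (y ++ o) x).
    rewrite rcons_uniq mem_cat negb_or xNy mem_o eqxx andbF cat_uniq uniq_y.
    rewrite filter_uniq ?enum_uniq // andbT /=.
    by apply/hasPn => j; rewrite mem_o => /andP [].
  rewrite /is_perm_seq uniq_s -(card_uniqP uniq_s) /=; apply/eqP; rewrite -[RHS]card_ord.
  by apply: eq_card => j; rewrite mem_rcons in_cons mem_cat mem_o; case: eqP; case: (j \in y).
rewrite /final_array run_cat empty_pa01 run_zero_chain // (eq_pa01 mem_rev_y (frefl _)) run_ones.
- apply/ffunP => j; rewrite !ffunE mem_catrev cats0 mem_o.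
  by case: eqP => //; case: (j \in y).
- by move=> u; rewrite mem_o => /andP [uNy ux]; apply: A1.
- by move=> u; rewrite mem_o => /andP [].
Qed.

End MonotoneAlice.

Definition longest_zero_prefix n (A : alice n) (y : seq 'I_n) :=
  zero_prefix A y /\ forall y', zero_prefix A y' -> size y' <= size y.

Definition zero_sets (T : finType) (Y : {set T}) : {set {set T}} :=
  Y |: [set u |: Y | u in ~: Y].

Section LongestZeroPrefix.
Variables (n : nat) (A : alice n).
Hypothesis monoA : monotone_alice A.

Lemma exists_longest_zero_prefix : exists y, longest_zero_prefix A y.
Proof.
pose P m := [exists t : m.-tuple 'I_n, zero_prefix A t].
have P0 : exists m, P m by exists 0; apply/existsP; exists [tuple].
have P_le m : P m -> m <= n by case/existsP => t /zero_prefix_size_le; rewrite size_tuple.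
case: (ex_maxnP P0 P_le) => m /existsP [t zero_t] max_m.
exists t; split => // y' zero_y'; rewrite size_tuple; apply: max_m.
by apply/existsP; exists (in_tuple y').
Qed.

Lemma ones_after_longest y u : longest_zero_prefix A y -> u \notin y -> A u (pa01 y [::]).
Proof.
case=> zero_y longest_y uNy; apply/negPn/negP => Au0.
by have := longest_y _ (zero_prefix_rcons zero_y uNy Au0); rewrite size_rcons ltnn.
Qed.

Lemma play_outside_longest y x b : longest_zero_prefix A y -> x \notin y ->
  exists s, is_perm_seq (rcons s x) /\
    final_array A s x b = [ffun j => if j == x then b else j \notin y].
Proof.
move=> longest_y xNy; apply: play_zero_prefix => //; first by case: longest_y.
by move=> u uNy _; apply: ones_after_longest.
Qed.

Lemma play_outside y x : longest_zero_prefix A y -> x \notin y ->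
  exists s, is_perm_seq (rcons s x) /\ final_array A s x true = ones_off [set j in y].
Proof.
move=> longest_y xNy; have [s [perm_s final_s]] := play_outside_longest true longest_y xNy.
exists s; split => //; rewrite final_s; apply/ffunP => j; rewrite !ffunE inE.
by case: eqP => // ->; rewrite xNy.
Qed.

(* Drop [x] from [y] and stream it last with bit 0; the freed slot is either
   refilled by a cell [u] that now gets 0, or nothing outside [y] changes. *)
Lemma play_inside y x : longest_zero_prefix A y -> x \in y ->
  exists2 Z, Z \in zero_sets [set j in y] &
    exists s b, is_perm_seq (rcons s x) /\ final_array A s x b = ones_off Z.
Proof.
move=> [zero_y longest_y] xy; have uniq_y : uniq y by case/andP: zero_y.
set y1 := filter (predC1 x) y.
have zero_y1 : zero_prefix A y1 by apply: zero_prefix_filter.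
have mem_y1 j : (j \in y1) = (j != x) && (j \in y) by rewrite mem_filter.
have xNy1 : x \notin y1 by rewrite mem_y1 eqxx.
have size_y1 : (size y1).+1 = size y.
  rewrite /y1 -rem_filter // size_rem // prednK //.
  by rewrite (leq_trans _ (count_size (pred1 x) y)) // -has_count has_pred1.
case: (boolP [exists u, (u \notin y) && ~~ A u (pa01 y1 [::])]).
  case/existsP => u /andP [uNy Au0].
  have uNy1 : u \notin y1 by rewrite mem_y1 (negbTE uNy) andbF.
  have zero_y2 := zero_prefix_rcons zero_y1 uNy1 Au0.
  have longest_y2 : longest_zero_prefix A (rcons y1 u).
    by split=> // y' /longest_y; rewrite size_rcons size_y1.
  have xNy2 : x \notin rcons y1 u.
    by rewrite mem_rcons in_cons negb_or xNy1 andbT; apply: contraNneq uNy => <-.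
  exists (u |: [set j in y]).
    by rewrite !inE; apply/orP; right; apply: imset_f; rewrite !inE.
  have [s [perm_s final_s]] := play_outside_longest false longest_y2 xNy2.
  exists s, false; split => //; rewrite final_s; apply/ffunP => j; rewrite !ffunE !inE.
  by rewrite mem_rcons in_cons mem_y1; case: eqP => [->|]; rewrite ?xy ?orbT.
move/existsPn => ones_y1.
exists [set j in y]; first by rewrite !inE eqxx.
have [s [perm_s final_s]] : exists s, is_perm_seq (rcons s x) /\
    final_array A s x false = [ffun j => if j == x then false else j \notin y1].
  apply: play_zero_prefix => // u uNy1 ux; have := ones_y1 u.
  by rewrite mem_y1 ux /= in uNy1; rewrite uNy1 negbK.
exists s, false; split => //; rewrite final_s; apply/ffunP => j; rewrite !ffunE inE mem_y1.
by case: eqP => [->|]; rewrite ?xy.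
Qed.

End LongestZeroPrefix.

Lemma card_bigcup_le (I T : finType) (P : {set I}) (F : I -> {set T}) m :
  {in P, forall i, #|F i| <= m} -> #|\bigcup_(i in P) F i| <= #|P| * m.
Proof.
move=> small_F; rewrite -sum_nat_const.
elim/big_rec2: _ => [|i k U Pi le_U]; first by rewrite cards0.
by apply: leq_trans (leq_card_setU _ _) _; apply: leq_add; rewrite ?small_F.
Qed.

Lemma card_zero_sets (T : finType) (Y : {set T}) : #|zero_sets Y| <= #|~: Y|.+1.
Proof. by apply: leq_trans (leq_card_setU _ _) _; rewrite cards1 add1n ltnS leq_imset_card. Qed.

Lemma card_le_zero_sets_cover (T : finType) (Y : {set T}) (F : {set T} -> {set T}) m :
  (forall Z, #|F Z| <= m) -> ~: Y \subset F Y ->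
  [set: T] \subset \bigcup_(Z in zero_sets Y) F Z -> #|T| <= m.+1 * m.
Proof.
move=> small_F sub_Y cover; rewrite -cardsT.
apply: leq_trans (subset_leq_card cover) _.
apply: leq_trans (card_bigcup_le (fun Z _ => small_F Z)) _.
rewrite leq_mul2r (leq_trans (card_zero_sets Y)) ?orbT //.
by rewrite ltnS (leq_trans (subset_leq_card sub_Y)).
Qed.

Lemma isqrt_sq n : isqrt n * isqrt n <= n.
Proof. by apply: (big_ind (fun m => m * m <= n)) => // a b; rewrite /maxn; case: ifP. Qed.

Lemma isqrt_gt0 n : 0 < n -> 0 < isqrt n.
Proof.
move=> n_gt0; pose one : 'I_n.+1 := Ordinal (n_gt0 : 1 < n.+1).
exact: (@leq_bigmax_cond _ (fun k : 'I_n.+1 => k * k <= n) _ one).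
Qed.

Theorem theorem3 (n : nat) (hn : 0 < n) (A : alice n) (B : bob n) :
  monotone_alice A -> valid A B ->
  exists (s : seq 'I_n) (x : 'I_n) (b : bool),
    is_perm_seq (rcons s x) /\ isqrt n <= #|B (final_array A s x b)|.
Proof.
move=> monoA validB; apply: NNPP => no_large; set k := isqrt n.
have small s x b : is_perm_seq (rcons s x) -> #|B (final_array A s x b)| < k.
  by move=> perm_s; rewrite ltnNge; apply/negP => large; apply: no_large; exists s, x, b.
have [y longest_y] := exists_longest_zero_prefix A.
(* Truncating large answers to [set0] keeps every last cell of a play, by [small]. *)
pose F Z := if #|B (ones_off Z)| < k then B (ones_off Z) else set0.
have small_F Z : #|F Z| <= k.-1.
  by rewrite /F; case: ifP => [|_]; [case: (k) | rewrite cards0].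
have in_F s x b Z : is_perm_seq (rcons s x) -> final_array A s x b = ones_off Z -> x \in F Z.
  move=> perm_s final_s; have := small s x b perm_s; have := validB s x b perm_s.
  by rewrite /F final_s => ? ->.
have outside_F : ~: [set j in y] \subset F [set j in y].
  apply/subsetP => x; rewrite !inE => xNy.
  by have [s [perm_s /in_F]] := play_outside monoA longest_y xNy; apply.
have cover : [set: 'I_n] \subset \bigcup_(Z in zero_sets [set j in y]) F Z.
  apply/subsetP => x _; case: (boolP (x \in y)) => [xy | xNy].
    have [Z zero_Z [s [b [perm_s /in_F x_F]]]] := play_inside monoA longest_y xy.
    by apply/bigcupP; exists Z; last exact: x_F.
  by apply/bigcupP; exists [set j in y]; rewrite ?setU11 // (subsetP outside_F) // !inE.
have := card_le_zero_sets_cover small_F outside_F cover.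
rewrite card_ord; have := isqrt_sq n; rewrite -/k.
by case: (k) (isqrt_gt0 hn) => // k' _ /=; lia.
Qed.
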